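(* Let $S$ be a self-adjoint subspace in $X^2$ and $A$ a closed Hermitian subspace in $X^2$ with $D(S)\subset D(A)$. If $A_s$ is $S_s$-bounded with $S_s$-bound less than $1$, then $S+A$ is a self-adjoint subspace in $X^2$.
   Context: $X$ is a complex Hilbert space and $X^2=X\times X$ carries the inner product $\langle (x,f),(y,g)\rangle=\langle x,y\rangle+\langle f,g\rangle$. A subspace $T$ in $X^2$ means a linear subspace of $X^2$ (a linear relation); a linear operator in $X$ is identified with its graph. Notation: $D(T)=\{x:(x,f)\in T \text{ for some } f\}$, $T(x)=\{f:(x,f)\in T\}$. The adjoint is $T^*=\{(y,g)\in X^2:\langle g,x\rangle=\langle y,f\rangle \text{ for all }(x,f)\in T\}$; $T$ is Hermitian if $T\subset T^*$ and self-adjoint if $T=T^*$. For subspaces $S,A$ in $X^2$, $S+A=\{(x,f+g):(x,f)\in S,(x,g)\in A\}$. For a closed subspace $T$, set $T_\infty=\{(0,g)\in X^2:(0,g)\in T\}$ and $T_s=T\ominus T_\infty$ (orthogonal complement of $T_\infty$ in $T$), so $T=T_s\oplus T_\infty$; $T_s$ is the graph of a linear operator (the operator part of $T$) with $D(T_s)=D(T)$ and $R(T_s)\subset T(0)^\perp$. For linear operators $U,V$ in $X$: $U$ is $V$-bounded if $D(V)\subset D(U)$ and there is $c\ge0$ with $\|Ux\|\le c(\|x\|+\|Vx\|)$ for $x\in D(V)$; the $V$-bound of $U$ is the infimum of all $a\ge 0$ for which some $b\ge0$ satisfies $\|Ux\|\le a\|Vx\|+b\|x\|$ for all $x\in D(V)$.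 *)

From Stdlib Require Import Reals.
Open Scope R_scope.
Set Implicit Arguments.

Record C := mkC { Re : R; Im : R }.
Definition C0 : C := mkC 0 0.
Definition C1 : C := mkC 1 0.
Definition Cadd (a b : C) : C := mkC (Re a + Re b) (Im a + Im b).
Definition Cmul (a b : C) : C :=
  mkC (Re a * Re b - Im a * Im b) (Re a * Im b + Im a * Re b).
Definition Cconj (a : C) : C := mkC (Re a) (- Im a).

Record Hilbert := {
  hcar :> Type;
  hzero : hcar;
  hadd : hcar -> hcar -> hcar;
  hopp : hcar -> hcar;
  hscal : C -> hcar -> hcar;
  hinner : hcar -> hcar -> C;
  hadd_assoc : forall x y z, hadd x (hadd y z) = hadd (hadd x y) z;
  hadd_comm : forall x y, hadd x y = hadd y x;
  hadd_zero : forall x, hadd x hzero = x;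
  hadd_opp : forall x, hadd x (hopp x) = hzero;
  hscal_one : forall x, hscal C1 x = x;
  hscal_assoc : forall a b x, hscal a (hscal b x) = hscal (Cmul a b) x;
  hscal_distr_v : forall a x y, hscal a (hadd x y) = hadd (hscal a x) (hscal a y);
  hscal_distr_s : forall a b x, hscal (Cadd a b) x = hadd (hscal a x) (hscal b x);
  hinner_add : forall x y z, hinner (hadd x y) z = Cadd (hinner x z) (hinner y z);
  hinner_scal : forall a x z, hinner (hscal a x) z = Cmul a (hinner x z);
  hinner_sym : forall x y, hinner y x = Cconj (hinner x y);
  hinner_pos : forall x, 0 <= Re (hinner x x);
  hinner_def : forall x, hinner x x = C0 -> x = hzero;
  hcomplete : forall u : nat -> hcar,
    (forall eps, 0 < eps -> exists N, forall m n, (N <= m)%nat -> (N <= n)%nat ->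
       sqrt (Re (hinner (hadd (u m) (hopp (u n))) (hadd (u m) (hopp (u n))))) < eps) ->
    exists l, forall eps, 0 < eps -> exists N, forall n, (N <= n)%nat ->
       sqrt (Re (hinner (hadd (u n) (hopp l)) (hadd (u n) (hopp l)))) < eps
}.

Arguments hzero {h}.
Arguments hadd {h}.
Arguments hopp {h}.
Arguments hscal {h}.
Arguments hinner {h}.

Definition hnorm {X : Hilbert} (x : X) : R := sqrt (Re (hinner x x)).
Definition hsub {X : Hilbert} (x y : X) : X := hadd x (hopp y).

Definition converges_to {X : Hilbert} (u : nat -> X) (l : X) : Prop :=
  forall eps, 0 < eps -> exists N, forall n, (N <= n)%nat -> hnorm (hsub (u n) l) < eps.

(** * Linear relations: a subset of X^2 is given as a binary predicate,
    [T x f] meaning (x,f) ∈ T. *)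
Definition rel (X : Hilbert) := X -> X -> Prop.

Definition inner2 {X : Hilbert} (x f y g : X) : C :=
  Cadd (hinner x y) (hinner f g).
Definition norm2 {X : Hilbert} (x f : X) : R :=
  sqrt (Re (inner2 x f x f)).

Definition is_subspace {X : Hilbert} (T : rel X) : Prop :=
  T hzero hzero /\
  (forall x f y g, T x f -> T y g -> T (hadd x y) (hadd f g)) /\
  (forall a x f, T x f -> T (hscal a x) (hscal a f)).

Definition is_closed {X : Hilbert} (T : rel X) : Prop :=
  forall (u v : nat -> X) (x f : X),
    (forall n, T (u n) (v n)) ->
    (forall eps, 0 < eps -> exists N, forall n, (N <= n)%nat ->
        norm2 (hsub (u n) x) (hsub (v n) f) < eps) ->
    T x f.

Definition dom {X : Hilbert} (T : rel X) (x : X) : Prop := exists f, T x f.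

Definition adjoint {X : Hilbert} (T : rel X) : rel X :=
  fun y g => forall x f, T x f -> hinner g x = hinner y f.

Definition rel_incl {X : Hilbert} (T U : rel X) : Prop := forall x f, T x f -> U x f.

Definition hermitian {X : Hilbert} (T : rel X) : Prop := rel_incl T (adjoint T).

Definition self_adjoint {X : Hilbert} (T : rel X) : Prop :=
  rel_incl T (adjoint T) /\ rel_incl (adjoint T) T.

Definition rel_sum {X : Hilbert} (S A : rel X) : rel X :=
  fun x h => exists f g, S x f /\ A x g /\ h = hadd f g.

Definition T_inf {X : Hilbert} (T : rel X) : rel X :=
  fun x g => x = hzero /\ T hzero g.

Definition ominus {X : Hilbert} (T M : rel X) : rel X :=
  fun x f => T x f /\ (forall y g, M y g -> inner2 x f y g = C0).

Definition T_s {X : Hilbert} (T : rel X) : rel X := ominus T (T_inf T).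

(** U is V-bounded (U, V graphs of operators) *)
Definition rel_bounded {X : Hilbert} (U V : rel X) : Prop :=
  (forall x, dom V x -> dom U x) /\
  exists c, 0 <= c /\
    forall x u v, V x v -> U x u -> hnorm u <= c * (hnorm x + hnorm v).

Definition bound_set {X : Hilbert} (U V : rel X) (a : R) : Prop :=
  0 <= a /\ exists b, 0 <= b /\
    forall x u v, V x v -> U x u -> hnorm u <= a * hnorm v + b * hnorm x.

Definition is_inf (P : R -> Prop) (m : R) : Prop :=
  (forall a, P a -> m <= a) /\ (forall m', (forall a, P a -> m' <= a) -> m' <= m).

Definition rel_bound {X : Hilbert} (U V : rel X) (r : R) : Prop :=
  is_inf (bound_set U V) r.

From Pilot Require Import Defs.
From Stdlib Require Import Reals Lra Lia Classical ClassicalEpsilon FunctionalExtensionality.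
Open Scope R_scope.

(* For real [m <> 0], the range of [S - i m] is dense because [S] is self-adjoint and closed
   because [|f - i m x|^2 = |f|^2 + m^2 |x|^2] on the graph of [S]; so [S - i m] is onto.
   On that graph [|S_s x| <= |f - i m x|] and [|m| |x| <= |f - i m x|], so the relative bound
   [|A_s x| <= a |S_s x| + b |x|] with [a < 1] gives [|A_s x| <= c |f - i m x|] with [c < 1]
   once [|m|] is large.  Then [S + A - i m] is onto by the Banach fixed point theorem, for
   [m] and [-m] alike, and a hermitian relation with this property is self-adjoint. *)

Lemma C_ext (a b : Defs.C) : Re a = Re b -> Im a = Im b -> a = b.
Proof. destruct a, b; simpl; intros; subst; reflexivity. Qed.

Definition Copp (a : Defs.C) : Defs.C := mkC (- Re a) (- Im a).

Definition Ci (m : R) : Defs.C := mkC 0 m.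

Section InnerProduct.
Context {X : Hilbert}.
Implicit Types x y z : X.

Lemma hinner_zero_l z : hinner hzero z = C0.
Proof.
  pose proof (hinner_add _ hzero hzero z) as H. rewrite hadd_zero in H.
  apply (f_equal Re) in H as H1. apply (f_equal Im) in H as H2. simpl in H1, H2.
  apply C_ext; simpl; lra.
Qed.

Lemma hinner_opp_l x z : hinner (hopp x) z = Copp (hinner x z).
Proof.
  pose proof (hinner_add _ x (hopp x) z) as H. rewrite hadd_opp, hinner_zero_l in H.
  apply (f_equal Re) in H as H1. apply (f_equal Im) in H as H2. simpl in H1, H2.
  apply C_ext; simpl; lra.
Qed.

Lemma hinner_add_r z x y : hinner z (hadd x y) = Cadd (hinner z x) (hinner z y).
Proof.
  rewrite (hinner_sym _ (hadd x y) z), hinner_add, (hinner_sym _ x z), (hinner_sym _ y z).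
  apply C_ext; simpl; ring.
Qed.

Lemma hinner_scal_r z a x : hinner z (hscal a x) = Cmul (Cconj a) (hinner z x).
Proof.
  rewrite (hinner_sym _ (hscal a x) z), hinner_scal, (hinner_sym _ x z).
  apply C_ext; simpl; ring.
Qed.

Lemma hinner_opp_r z x : hinner z (hopp x) = Copp (hinner z x).
Proof.
  rewrite (hinner_sym _ (hopp x) z), hinner_opp_l, (hinner_sym _ x z).
  apply C_ext; simpl; ring.
Qed.

Lemma hinner_zero_r z : hinner z hzero = C0.
Proof. rewrite (hinner_sym _ hzero z), hinner_zero_l. apply C_ext; simpl; ring. Qed.

End InnerProduct.

Ltac expand_inner := unfold hsub, inner2, Ci in *;
  repeat rewrite ?hinner_add, ?hinner_add_r, ?hinner_scal, ?hinner_scal_r,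
    ?hinner_opp_l, ?hinner_opp_r, ?hinner_zero_l, ?hinner_zero_r in *.

Lemma hvec_ext {X : Hilbert} (x y : X) : (forall z, hinner x z = hinner y z) -> x = y.
Proof.
  intro H.
  assert (E : hadd x (hopp y) = hzero).
  { apply hinner_def. rewrite hinner_add, hinner_opp_l, H. apply C_ext; simpl; ring. }
  rewrite <- (hadd_zero _ x), <- (hadd_opp _ y), (hadd_comm _ y), hadd_assoc, E,
    hadd_comm, hadd_zero. reflexivity.
Qed.

Ltac hvec := apply hvec_ext; let z := fresh "z" in intro z; expand_inner; apply C_ext; simpl; ring.

Definition hsqnorm {X : Hilbert} (x : X) : R := Re (hinner x x).

Section Norm.
Context {X : Hilbert}.
Implicit Types x y z : X.

Lemma Im_hinner_self x : Im (hinner x x) = 0.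
Proof. pose proof (f_equal Im (hinner_sym _ x x)) as H. simpl in H. lra. Qed.

Lemma Re_hinner_sym x y : Re (hinner y x) = Re (hinner x y).
Proof. rewrite hinner_sym. reflexivity. Qed.

Lemma Im_hinner_sym x y : Im (hinner y x) = - Im (hinner x y).
Proof. rewrite hinner_sym. reflexivity. Qed.

Lemma hsqnorm_ge0 x : 0 <= hsqnorm x.
Proof. apply hinner_pos. Qed.

Lemma hsqnorm_eq0 x : hsqnorm x = 0 -> x = hzero.
Proof. intro H. apply hinner_def, C_ext; [exact H | apply Im_hinner_self]. Qed.

Lemma hnorm_ge0 x : 0 <= hnorm x.
Proof. apply sqrt_pos. Qed.

Lemma hnorm_sqr x : hnorm x * hnorm x = hsqnorm x.
Proof. apply sqrt_sqrt, hsqnorm_ge0. Qed.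

Lemma hsqnorm_lt_sqr x e : hnorm x < e -> hsqnorm x < e * e.
Proof. intro H. pose proof (hnorm_sqr x). pose proof (hnorm_ge0 x). nra. Qed.

Lemma hnorm_lt_of_hsqnorm x e : 0 < e -> hsqnorm x < e * e -> hnorm x < e.
Proof.
  intros He H. unfold hnorm. rewrite <- (sqrt_square e) by lra.
  apply sqrt_lt_1_alt. split; [apply hsqnorm_ge0 | exact H].
Qed.

Lemma hnorm_le_of_hsqnorm x e : 0 <= e -> hsqnorm x <= e * e -> hnorm x <= e.
Proof.
  intros He H. unfold hnorm. rewrite <- (sqrt_square e) by lra.
  apply sqrt_le_1_alt. exact H.
Qed.

Lemma hsqnorm_scal c x : hsqnorm (hscal c x) = (Re c * Re c + Im c * Im c) * hsqnorm x.
Proof. unfold hsqnorm. expand_inner. simpl. rewrite Im_hinner_self. ring. Qed.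

Lemma hnorm_scal c x : hnorm (hscal c x) = sqrt (Re c * Re c + Im c * Im c) * hnorm x.
Proof.
  unfold hnorm. fold (hsqnorm (hscal c x)) (hsqnorm x). rewrite hsqnorm_scal.
  apply sqrt_mult; [nra | apply hsqnorm_ge0].
Qed.

Lemma hopp_scal x : hopp x = hscal (mkC (-1) 0) x.
Proof. hvec. Qed.

Lemma hnorm_opp x : hnorm (hopp x) = hnorm x.
Proof.
  rewrite hopp_scal, hnorm_scal. simpl.
  replace (-1 * -1 + 0 * 0) with 1 by ring. rewrite sqrt_1. ring.
Qed.

Lemma hnorm_scal_i m x : hnorm (hscal (Ci m) x) = Rabs m * hnorm x.
Proof.
  rewrite hnorm_scal. simpl. replace (0 * 0 + m * m) with (Rsqr m) by (unfold Rsqr; ring).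
  rewrite sqrt_Rsqr_abs. reflexivity.
Qed.

Lemma Re_hinner_le x y : Re (hinner x y) <= hnorm x * hnorm y.
Proof.
  pose proof (hnorm_sqr x). pose proof (hnorm_sqr y).
  pose proof (hnorm_ge0 x). pose proof (hnorm_ge0 y).
  destruct (Req_dec (hsqnorm y) 0) as [E|E].
  - apply hsqnorm_eq0 in E. subst y. rewrite hinner_zero_r. simpl. nra.
  - set (r := Re (hinner x y)).
    (* [0 <= |<y,y> x - r y|^2] *)
    pose proof (hsqnorm_ge0 (hadd (hscal (mkC (hsqnorm y) 0) x) (hscal (mkC (- r) 0) y))) as P.
    pose proof (hsqnorm_ge0 y).
    unfold hsqnorm in *. expand_inner. simpl in P.
    rewrite (Re_hinner_sym x y), Im_hinner_self, (Im_hinner_self y) in P. fold r in P.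
    assert (Q : r * r <= Re (hinner x x) * Re (hinner y y)).
    { assert (Re (hinner y y) * (Re (hinner x x) * Re (hinner y y) - r * r) >= 0) by nra.
      nra. }
    clearbody r.
    assert (0 <= hnorm x * hnorm y) by nra.
    destruct (Rle_dec r (hnorm x * hnorm y)); [assumption | nra].
Qed.
Lemma Rabs_Re_hinner_le x y : Rabs (Re (hinner x y)) <= hnorm x * hnorm y.
Proof.
  pose proof (Re_hinner_le x y) as H. pose proof (Re_hinner_le (hopp x) y) as H0.
  rewrite hinner_opp_l, hnorm_opp in H0. simpl in H0.
  apply Rabs_le. lra.
Qed.

Lemma Rabs_Im_hinner_le x y : Rabs (Im (hinner x y)) <= hnorm x * hnorm y.
Proof.
  pose proof (Rabs_Re_hinner_le x (hscal (Ci 1) y)) as H.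
  rewrite hinner_scal_r, hnorm_scal_i, Rabs_R1 in H. simpl in H.
  replace (0 * Re (hinner x y) - - (1) * Im (hinner x y)) with (Im (hinner x y)) in H by ring.
  lra.
Qed.

Lemma hnorm_triangle x y : hnorm (hadd x y) <= hnorm x + hnorm y.
Proof.
  pose proof (hnorm_ge0 x). pose proof (hnorm_ge0 y).
  apply hnorm_le_of_hsqnorm; [lra|].
  pose proof (Re_hinner_le x y). pose proof (hnorm_sqr x). pose proof (hnorm_sqr y).
  unfold hsqnorm in *. expand_inner. simpl. rewrite (Re_hinner_sym x y). nra.
Qed.

Lemma hdist_triangle x y z : hnorm (hsub x z) <= hnorm (hsub x y) + hnorm (hsub y z).
Proof. replace (hsub x z) with (hadd (hsub x y) (hsub y z)) by hvec. apply hnorm_triangle. Qed.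

Lemma hdist_sym x y : hnorm (hsub x y) = hnorm (hsub y x).
Proof. replace (hsub x y) with (hopp (hsub y x)) by hvec. apply hnorm_opp. Qed.

Lemma hsub_eq0 x y : hsub x y = hzero -> x = y.
Proof. intro H. replace x with (hadd (hsub x y) y) by hvec. rewrite H. hvec. Qed.

Lemma hnorm_zero : hnorm (@hzero X) = 0.
Proof. unfold hnorm. rewrite hinner_zero_l. apply sqrt_0. Qed.

Lemma hzero_of_hnorm_small x : (forall eps, 0 < eps -> hnorm x < eps) -> x = hzero.
Proof.
  intro H. apply hsqnorm_eq0. pose proof (hnorm_ge0 x).
  destruct (Req_dec (hnorm x) 0) as [E|E].
  - apply sqrt_eq_0; [apply hsqnorm_ge0 | exact E].
  - specialize (H (hnorm x)). lra.
Qed.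

End Norm.

Definition hcauchy {X : Hilbert} (u : nat -> X) : Prop :=
  forall eps, 0 < eps -> exists N, forall m n, (N <= m)%nat -> (N <= n)%nat ->
    hnorm (hsub (u m) (u n)) < eps.

Section Sequences.
Context {X : Hilbert}.
Implicit Types (u v : nat -> X) (x y : X).

Lemma hcauchy_converges u : hcauchy u -> exists l, converges_to u l.
Proof. apply hcomplete. Qed.

Lemma converges_hcauchy u l : converges_to u l -> hcauchy u.
Proof.
  intros H eps He. destruct (H (eps / 2)) as [N HN]; [lra|]. exists N. intros m n Hm Hn.
  pose proof (hdist_triangle (u m) l (u n)) as T. rewrite (hdist_sym l) in T.
  pose proof (HN m Hm). pose proof (HN n Hn). lra.
Qed.

Lemma converges_unique u l1 l2 : converges_to u l1 -> converges_to u l2 -> l1 = l2.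
Proof.
  intros H1 H2. apply hsub_eq0, hzero_of_hnorm_small. intros eps He.
  destruct (H1 (eps / 2)) as [N1 HN1]; [lra|]. destruct (H2 (eps / 2)) as [N2 HN2]; [lra|].
  set (n := max N1 N2).
  pose proof (hdist_triangle l1 (u n) l2) as T. rewrite (hdist_sym l1 (u n)) in T.
  pose proof (HN1 n (Nat.le_max_l _ _)). pose proof (HN2 n (Nat.le_max_r _ _)). lra.
Qed.

Lemma converges_sub_scal u v a b c : converges_to u a -> converges_to v b ->
  converges_to (fun n => hsub (u n) (hscal c (v n))) (hsub a (hscal c b)).
Proof.
  intros Hu Hv eps He. set (K := sqrt (Re c * Re c + Im c * Im c)).
  assert (HK : 0 <= K) by apply sqrt_pos.
  destruct (Hu (eps / 2)) as [N1 H1]; [lra|].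
  destruct (Hv (eps / 2 / (K + 1))) as [N2 H2]; [apply Rdiv_lt_0_compat; lra|].
  exists (max N1 N2). intros n Hn.
  specialize (H1 n (Nat.le_trans _ _ _ (Nat.le_max_l _ _) Hn)).
  specialize (H2 n (Nat.le_trans _ _ _ (Nat.le_max_r _ _) Hn)).
  replace (hsub (hsub (u n) (hscal c (v n))) (hsub a (hscal c b)))
    with (hadd (hsub (u n) a) (hopp (hscal c (hsub (v n) b)))) by hvec.
  eapply Rle_lt_trans; [apply hnorm_triangle|].
  rewrite hnorm_opp, hnorm_scal. fold K.
  assert (K * (eps / 2 / (K + 1)) < eps / 2).
  { apply (Rmult_lt_reg_r (K + 1)); [lra|].
    replace (K * (eps / 2 / (K + 1)) * (K + 1)) with (K * (eps / 2)) by (field; lra). nra. }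
  pose proof (hnorm_ge0 (hsub (v n) b)). nra.
Qed.

Lemma converges_hinner u x y : converges_to u x ->
  forall eps, 0 < eps -> exists N, forall n, (N <= n)%nat ->
    Rabs (Re (hinner (u n) y) - Re (hinner x y)) < eps /\
    Rabs (Im (hinner (u n) y) - Im (hinner x y)) < eps.
Proof.
  intros H eps He. pose proof (hnorm_ge0 y) as Hy.
  set (d := eps / (hnorm y + 1)).
  assert (Hd : 0 < d) by (apply Rdiv_lt_0_compat; lra).
  assert (Hd2 : d * (hnorm y + 1) = eps) by (unfold d; field; lra).
  destruct (H d Hd) as [N HN]. exists N. intros n Hn. specialize (HN n Hn).
  pose proof (hnorm_ge0 (hsub (u n) x)).
  replace (Re (hinner (u n) y) - Re (hinner x y)) with (Re (hinner (hsub (u n) x) y))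
    by (expand_inner; simpl; ring).
  replace (Im (hinner (u n) y) - Im (hinner x y)) with (Im (hinner (hsub (u n) x) y))
    by (expand_inner; simpl; ring).
  pose proof (Rabs_Re_hinner_le (hsub (u n) x) y). pose proof (Rabs_Im_hinner_le (hsub (u n) x) y).
  split; nra.
Qed.

Lemma hcauchy_of_dominated u v k : 0 < k ->
  (forall a b, k * hsqnorm (hsub (v a) (v b)) <= hsqnorm (hsub (u a) (u b))) ->
  hcauchy u -> hcauchy v.
Proof.
  intros Hk Hdom Hu eps He. destruct (Hu (eps * sqrt k)) as [N HN].
  { apply Rmult_lt_0_compat; [lra | apply sqrt_lt_R0; lra]. }
  exists N. intros a b Ha Hb. apply hnorm_lt_of_hsqnorm; [lra|].
  specialize (HN a b Ha Hb). apply hsqnorm_lt_sqr in HN.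
  replace (eps * sqrt k * (eps * sqrt k)) with (eps * eps * (sqrt k * sqrt k)) in HN by ring.
  rewrite sqrt_sqrt in HN by lra.
  pose proof (Hdom a b). apply (Rmult_lt_reg_l k); [lra|]. nra.
Qed.

Lemma hcauchy_of_hsqnorm_geometric u K c : 0 <= K -> 0 <= c < 1 ->
  (forall m n, hsqnorm (hsub (u m) (u n)) <= K * (c ^ m + c ^ n)) -> hcauchy u.
Proof.
  intros HK Hc Hu eps He.
  destruct (pow_lt_1_zero c) with (y := eps * eps / (2 * K + 1)) as [N HN].
  { rewrite Rabs_pos_eq; lra. } { apply Rdiv_lt_0_compat; nra. }
  assert (Hsmall : forall n, (N <= n)%nat -> (2 * K + 1) * c ^ n < eps * eps).
  { intros n Hn. specialize (HN n Hn). rewrite Rabs_pos_eq in HN by (apply pow_le; lra).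
    replace (eps * eps) with (eps * eps / (2 * K + 1) * (2 * K + 1)) by (field; lra).
    rewrite Rmult_comm. apply Rmult_lt_compat_r; lra. }
  exists N. intros m n Hm Hn. apply hnorm_lt_of_hsqnorm; [lra|].
  pose proof (Hsmall m Hm). pose proof (Hsmall n Hn). pose proof (Hu m n).
  pose proof (pow_le c m (proj1 Hc)). pose proof (pow_le c n (proj1 Hc)). nra.
Qed.

Lemma hcauchy_of_geometric_steps u c d : 0 <= c < 1 ->
  (forall n, hnorm (hsub (u (S n)) (u n)) <= c ^ n * d) -> hcauchy u.
Proof.
  intros Hc Hstep.
  assert (Hd : 0 <= d).
  { pose proof (Hstep O). pose proof (hnorm_ge0 (hsub (u 1%nat) (u O))). simpl in *. lra. }
  (* the partial geometric sum [d c^n (1 + c + ... + c^(j-1))], multiplied by [1 - c] *)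
  assert (Htail : forall n j,
            hnorm (hsub (u (j + n)%nat) (u n)) * (1 - c) <= d * c ^ n * (1 - c ^ j)).
  { intros n j. induction j as [|j IH].
    - simpl. replace (hsub (u n) (u n)) with (@hzero X) by hvec. rewrite hnorm_zero. lra.
    - pose proof (hdist_triangle (u (S j + n)%nat) (u (j + n)%nat) (u n)).
      pose proof (Hstep (j + n)%nat). simpl (S j + n)%nat in *.
      rewrite pow_add in H0. change (c ^ S j) with (c * c ^ j).
      pose proof (pow_le c n (proj1 Hc)). pose proof (pow_le c j (proj1 Hc)).
      assert (0 <= d * c ^ n * c ^ j) by (apply Rmult_le_pos; [apply Rmult_le_pos|]; lra).
      nra. }
  intros eps He.
  destruct (pow_lt_1_zero c) with (y := eps * (1 - c) / (d + 1)) as [N HN].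
  { rewrite Rabs_pos_eq; lra. } { apply Rdiv_lt_0_compat; nra. }
  assert (Key : forall n j, (N <= n)%nat -> hnorm (hsub (u (j + n)%nat) (u n)) < eps).
  { intros n j Hn. specialize (HN n Hn). rewrite Rabs_pos_eq in HN by (apply pow_le; lra).
    pose proof (Htail n j). pose proof (pow_le c n (proj1 Hc)). pose proof (pow_le c j (proj1 Hc)).
    assert (0 <= d * c ^ n * c ^ j) by (apply Rmult_le_pos; [apply Rmult_le_pos|]; lra).
    assert (c ^ n * (d + 1) < eps * (1 - c)).
    { replace (eps * (1 - c)) with (eps * (1 - c) / (d + 1) * (d + 1)) by (field; lra).
      apply Rmult_lt_compat_r; lra. }
    apply (Rmult_lt_reg_r (1 - c)); nra. }
  exists N. intros m n Hm Hn. destruct (Nat.le_ge_cases n m) as [L|L].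
  - replace m with ((m - n) + n)%nat by lia. apply Key; auto.
  - rewrite hdist_sym. replace n with ((n - m) + m)%nat by lia. apply Key; auto.
Qed.

End Sequences.

Lemma Req_of_Rabs_small (a b : R) : (forall eps, 0 < eps -> Rabs (a - b) < eps) -> a = b.
Proof.
  intro H. destruct (Req_dec a b) as [|E]; auto.
  specialize (H (Rabs (a - b))). assert (0 < Rabs (a - b)) by (apply Rabs_pos_lt; lra). lra.
Qed.

Lemma adjoint_closed {X : Hilbert} (T : rel X) (xs fs : nat -> X) x f :
  (forall n, adjoint T (xs n) (fs n)) -> converges_to xs x -> converges_to fs f ->
  adjoint T x f.
Proof.
  intros Hn Hx Hf y g Hyg.
  assert (E : forall n, hinner (fs n) y = hinner (xs n) g) by (intro n; exact (Hn n y g Hyg)).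
  apply C_ext; apply Req_of_Rabs_small; intros eps He;
    destruct (converges_hinner fs f y Hf (eps / 2)) as [N1 H1]; try lra;
    destruct (converges_hinner xs x g Hx (eps / 2)) as [N2 H2]; try lra;
    set (n := max N1 N2);
    destruct (H1 n (Nat.le_max_l _ _)) as [A1 A2]; destruct (H2 n (Nat.le_max_r _ _)) as [B1 B2];
    rewrite E in A1, A2;
    apply Rabs_def2 in A1; apply Rabs_def2 in A2; apply Rabs_def2 in B1; apply Rabs_def2 in B2;
    apply Rabs_def1; lra.
Qed.

Lemma inf_nonneg_exists {T : Type} (P : T -> Prop) (phi : T -> R) :
  (exists t, P t) -> (forall t, P t -> 0 <= phi t) ->
  exists d, 0 <= d /\ (forall t, P t -> d <= phi t) /\
            (forall e, 0 < e -> exists t, P t /\ phi t < d + e).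
Proof.
  intros [t0 Ht0] Hphi.
  set (E := fun r => exists t, P t /\ r = - phi t).
  assert (Eb : bound E) by (exists 0; intros r [t [Ht ->]]; specialize (Hphi t Ht); lra).
  destruct (completeness E Eb (ex_intro _ _ (ex_intro _ t0 (conj Ht0 eq_refl)))) as [L [HL1 HL2]].
  exists (- L). split; [|split].
  - enough (L <= 0) by lra. apply HL2. intros r [t [Ht ->]]. specialize (Hphi t Ht). lra.
  - intros t Ht. assert (- phi t <= L) by (apply HL1; exists t; auto). lra.
  - intros e He. apply NNPP. intro Hn.
    assert (L <= - (- L + e)); [|lra].
    apply HL2. intros r [t [Ht ->]].
    destruct (Rle_dec (- L + e) (phi t)) as [|Hl]; [lra|].
    exfalso. apply Hn. exists t. split; auto. lra.
Qed.

Definition closed_subspace {X : Hilbert} (M : X -> Prop) : Prop :=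
  M hzero /\
  (forall x y, M x -> M y -> M (hadd x y)) /\
  (forall c x, M x -> M (hscal c x)) /\
  (forall u l, (forall n, M (u n)) -> converges_to u l -> M l).

Section Projection.
Context {X : Hilbert}.
Implicit Types (x y w : X).

Lemma parallelogram_law w x y :
  hsqnorm (hsub x y) + 4 * hsqnorm (hsub w (hscal (mkC (/ 2) 0) (hadd x y))) =
  2 * hsqnorm (hsub w x) + 2 * hsqnorm (hsub w y).
Proof. unfold hsqnorm. expand_inner. simpl. field. Qed.

Lemma near_minimizers_close w x y d e1 e2 :
  0 <= d -> 0 <= e1 -> 0 <= e2 ->
  d <= hnorm (hsub w (hscal (mkC (/ 2) 0) (hadd x y))) ->
  hnorm (hsub w x) < d + e1 -> hnorm (hsub w y) < d + e2 ->
  hsqnorm (hsub x y) <= 4 * d * (e1 + e2) + 2 * e1 * e1 + 2 * e2 * e2.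
Proof.
  intros Hd He1 He2 Hmid Hx Hy.
  pose proof (parallelogram_law w x y).
  pose proof (hnorm_sqr (hsub w (hscal (mkC (/ 2) 0) (hadd x y)))).
  apply hsqnorm_lt_sqr in Hx. apply hsqnorm_lt_sqr in Hy. nra.
Qed.

Lemma minimizer_orthogonal x y :
  (forall t, hsqnorm x <= hsqnorm (hsub x (hscal t y))) -> hinner x y = C0.
Proof.
  intro Hmin. pose proof (hsqnorm_ge0 y) as Hy.
  set (s := / (hsqnorm y + 1)).
  assert (Hs1 : s * (hsqnorm y + 1) = 1) by (unfold s; field; lra).
  assert (Hs0 : 0 < s) by (apply Rinv_0_lt_compat; lra).
  (* test minimality against [t = s <x, y>] *)
  specialize (Hmin (mkC (s * Re (hinner x y)) (s * Im (hinner x y)))).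
  unfold hsqnorm in *. expand_inner. simpl in Hmin.
  rewrite (Re_hinner_sym x y), (Im_hinner_sym x y), (Im_hinner_self y) in Hmin.
  set (a := Re (hinner x y)) in *. set (b := Im (hinner x y)) in *.
  set (ny := Re (hinner y y)) in *.
  assert (s * (a * a + b * b) * (2 - s * ny) <= 0) by nra.
  assert (0 < s * (2 - s * ny)) by nra.
  assert (a * a + b * b <= 0) by nra.
  apply C_ext; simpl; fold a b; nra.
Qed.

Lemma projection_theorem (M : X -> Prop) w : closed_subspace M ->
  exists p, M p /\ forall m, M m -> hinner (hsub w p) m = C0.
Proof.
  intros (M0 & Madd & Mscal & Mlim).
  destruct (inf_nonneg_exists M (fun m => hnorm (hsub w m))) as (d & Hd0 & Hd & Happrox).
  { exists hzero. exact M0. } { intros; apply hnorm_ge0. }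
  assert (Hpos : forall n, 0 < (/ 2) ^ n) by (intro n; apply pow_lt; lra).
  destruct (choice (fun n m => M m /\ hnorm (hsub w m) < d + (/ 2) ^ n))
    as [ms Hms]; [intro n; exact (Happrox _ (Hpos n))|].
  assert (Hcauchy : hcauchy ms).
  { apply (hcauchy_of_hsqnorm_geometric ms (4 * d + 2) (/ 2)); [lra | lra |].
    intros a b. destruct (Hms a) as [Ma La]. destruct (Hms b) as [Mb Lb].
    pose proof (near_minimizers_close w (ms a) (ms b) d _ _ Hd0
                  (Rlt_le _ _ (Hpos a)) (Rlt_le _ _ (Hpos b))
                  (Hd _ (Mscal _ _ (Madd _ _ Ma Mb))) La Lb) as Hab.
    pose proof (pow_incr (/ 2) 1 a). pose proof (pow_incr (/ 2) 1 b). rewrite pow1 in *.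
    pose proof (Hpos a). pose proof (Hpos b). nra. }
  destruct (hcauchy_converges ms Hcauchy) as [p Hp].
  assert (Mp : M p) by (apply (Mlim ms p); [intro n; apply Hms | exact Hp]).
  assert (Hwp : hnorm (hsub w p) <= d).
  { apply Rle_plus_epsilon. intros e He.
    destruct (Hp (e / 2)) as [N1 HN1]; [lra|].
    destruct (pow_lt_1_zero (/ 2)) with (y := e / 2) as [N2 HN2]; [rewrite Rabs_pos_eq; lra | lra |].
    set (n := max N1 N2).
    pose proof (HN1 n (Nat.le_max_l _ _)). pose proof (HN2 n (Nat.le_max_r _ _)) as Hn.
    rewrite Rabs_pos_eq in Hn by (apply Rlt_le, Hpos).
    pose proof (hdist_triangle w (ms n) p). destruct (Hms n) as [_ L]. lra. }
  exists p. split; [exact Mp|]. intros m Hm.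
  apply minimizer_orthogonal. intro t.
  replace (hsub (hsub w p) (hscal t m)) with (hsub w (hadd p (hscal t m))) by hvec.
  pose proof (Hd _ (Madd _ _ Mp (Mscal t _ Hm))). rewrite <- !hnorm_sqr.
  pose proof (hnorm_ge0 (hsub w p)). nra.
Qed.

End Projection.

Definition shift_range {X : Hilbert} (T : rel X) (m : R) (u : X) : Prop :=
  exists x f, T x f /\ u = hsub f (hscal (Ci m) x).

Section Relations.
Context {X : Hilbert}.
Implicit Types (S T : rel X) (x y f g : X).

Lemma subspace_sub T : is_subspace T ->
  forall x f y g, T x f -> T y g -> T (hsub x y) (hsub f g).
Proof. intros (_ & Hadd & Hscal) x f y g H1 H2. unfold hsub. rewrite !hopp_scal. auto. Qed.

Lemma T_s_subspace T : is_subspace T -> is_subspace (T_s T).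
Proof.
  intros (H0 & Hadd & Hscal). unfold T_s, ominus. split; [|split].
  - split; auto. intros y g _. expand_inner. apply C_ext; simpl; ring.
  - intros x f y g [A1 A2] [B1 B2]. split; auto. intros y' g' Hyg.
    specialize (A2 y' g' Hyg). specialize (B2 y' g' Hyg). expand_inner.
    apply (f_equal Re) in A2 as A3. apply (f_equal Im) in A2 as A4.
    apply (f_equal Re) in B2 as B3. apply (f_equal Im) in B2 as B4.
    simpl in *. apply C_ext; simpl; lra.
  - intros a x f [A1 A2]. split; auto. intros y' g' Hyg.
    specialize (A2 y' g' Hyg). expand_inner.
    apply (f_equal Re) in A2 as A3. apply (f_equal Im) in A2 as A4.
    simpl in *. apply C_ext; simpl; nra.
Qed.

Lemma hermitian_Im_hinner T x f : hermitian T -> T x f -> Im (hinner f x) = 0.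
Proof.
  intros HT H. pose proof (HT x f H x f H) as E.
  rewrite (hinner_sym _ f x) in E. apply (f_equal Im) in E. simpl in E. lra.
Qed.

Lemma hsqnorm_shift T m x f : hermitian T -> T x f ->
  hsqnorm (hsub f (hscal (Ci m) x)) = hsqnorm f + m * m * hsqnorm x.
Proof.
  intros HT H. pose proof (hermitian_Im_hinner T x f HT H).
  unfold hsqnorm. expand_inner. simpl.
  rewrite (Re_hinner_sym f x), (Im_hinner_sym f x), ?(Im_hinner_self x), ?(Im_hinner_self f). nra.
Qed.

Lemma shift_range_closed S m : is_subspace S -> self_adjoint S -> m <> 0 ->
  forall u l, (forall n, shift_range S m (u n)) -> converges_to u l -> shift_range S m l.
Proof.
  intros HSs [HS1 HS2] Hm u l Hu Hl.
  destruct (choice (fun n xf => S (fst xf) (snd xf) /\ u n = hsub (snd xf) (hscal (Ci m) (fst xf))))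
    as [xfs Hxfs].
  { intro n. destruct (Hu n) as (x & f & H). exists (x, f). exact H. }
  set (xs := fun n => fst (xfs n)). set (fs := fun n => snd (xfs n)).
  assert (Hdist : forall a b, hsqnorm (hsub (u a) (u b)) =
            hsqnorm (hsub (fs a) (fs b)) + m * m * hsqnorm (hsub (xs a) (xs b))).
  { intros a b. unfold xs, fs. destruct (Hxfs a) as [Ha ->]. destruct (Hxfs b) as [Hb ->].
    rewrite <- (hsqnorm_shift S m); [| exact HS1 | apply subspace_sub; auto].
    f_equal. hvec. }
  pose proof (converges_hcauchy u l Hl) as Hu_cauchy.
  destruct (hcauchy_converges fs) as [f Hf].
  { apply (hcauchy_of_dominated u fs 1); [lra | | exact Hu_cauchy]. intros a b.
    rewrite Hdist. pose proof (hsqnorm_ge0 (hsub (xs a) (xs b))). nra. }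
  destruct (hcauchy_converges xs) as [x Hx].
  { apply (hcauchy_of_dominated u xs (m * m)); [nra | | exact Hu_cauchy]. intros a b.
    rewrite Hdist. pose proof (hsqnorm_ge0 (hsub (fs a) (fs b))). lra. }
  exists x, f. split.
  - apply HS2, (adjoint_closed S xs fs); auto. intro n. apply HS1, Hxfs.
  - apply (converges_unique u); [exact Hl|].
    replace u with (fun n => hsub (fs n) (hscal (Ci m) (xs n)))
      by (extensionality n; symmetry; apply Hxfs).
    apply converges_sub_scal; assumption.
Qed.

(* [S - i m] has dense range because [S] is symmetric, and closed range because [S] is closed
   and [|f - i m x|^2 = |f|^2 + m^2 |x|^2] on its graph. *)
Lemma self_adjoint_shift_surjective S m : is_subspace S -> self_adjoint S -> m <> 0 ->
  forall w, shift_range S m w.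
Proof.
  intros HSs HS Hm w. pose proof HSs as (S0 & Sadd & Sscal).
  assert (Hrange : closed_subspace (shift_range S m)).
  { split; [|split; [|split]].
    - exists hzero, hzero. split; [exact S0 | hvec].
    - intros u v (x1 & f1 & H1 & ->) (x2 & f2 & H2 & ->).
      exists (hadd x1 x2), (hadd f1 f2). split; [auto | hvec].
    - intros c u (x & f & H & ->). exists (hscal c x), (hscal c f). split; [auto | hvec].
    - exact (shift_range_closed S m HSs HS Hm). }
  destruct (projection_theorem _ w Hrange) as (p & Hp & Horth).
  set (q := hsub w p) in Horth.
  assert (Sq : S q (hscal (Ci (- m)) q)).
  { apply HS. intros x f Hxf.
    specialize (Horth _ (ex_intro _ x (ex_intro _ f (conj Hxf eq_refl)))). expand_inner.
    apply (f_equal Re) in Horth as H1. apply (f_equal Im) in Horth as H2. simpl in *.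
    apply C_ext; simpl; lra. }
  assert (Hq : q = hzero).
  { apply hsqnorm_eq0. pose proof (proj1 HS _ _ Sq _ _ Sq) as E.
    expand_inner. apply (f_equal Im) in E. simpl in E. rewrite Im_hinner_self in E.
    unfold hsqnorm. apply (Rmult_eq_reg_l m); [lra | exact Hm]. }
  destruct Hp as (x & f & Hxf & Hp). exists x, f. split; [exact Hxf|].
  rewrite <- Hp. apply hsub_eq0. exact Hq.
Qed.

Lemma self_adjoint_multivalued_part S : is_subspace S -> self_adjoint S ->
  closed_subspace (S hzero).
Proof.
  intros (S0 & Sadd & Sscal) HS. split; [exact S0 | split; [|split]].
  - intros f g Hf Hg. pose proof (Sadd _ _ _ _ Hf Hg) as H. rewrite hadd_zero in H. exact H.
  - intros c f Hf. pose proof (Sscal c _ _ Hf) as H.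
    replace (hscal c hzero) with (@hzero X) in H by hvec. exact H.
  - intros u l Hu Hl. apply (proj2 HS), (adjoint_closed S (fun _ => hzero) u); auto.
    + intro n. apply (proj1 HS), Hu.
    + intros eps He. exists O. intros n _.
      replace (hsub hzero hzero) with (@hzero X) by hvec. rewrite hnorm_zero. exact He.
Qed.

Lemma T_s_dom S x f : is_subspace S -> self_adjoint S -> S x f -> exists q, T_s S x q.
Proof.
  intros HSs HS Hxf.
  destruct (projection_theorem (S hzero) f (self_adjoint_multivalued_part S HSs HS))
    as (p & Sp & Hp).
  exists (hsub f p). split.
  - replace x with (hsub x hzero) by hvec. apply subspace_sub; auto.
  - intros y g [-> Hg]. specialize (Hp g Hg). expand_inner. rewrite Hp.
    apply C_ext; simpl; ring.
Qed.

Lemma hsqnorm_T_s_le S x f q : is_subspace S -> S x f -> T_s S x q -> hsqnorm q <= hsqnorm f.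
Proof.
  intros HSs Hf [Hq Horth].
  set (p := hsub f q).
  assert (Sp : S hzero p) by (replace (@hzero X) with (hsub x x) by hvec; apply subspace_sub; auto).
  assert (Hqp : hinner q p = C0).
  { specialize (Horth hzero p (conj eq_refl Sp)). expand_inner.
    apply (f_equal Re) in Horth as H1. apply (f_equal Im) in Horth as H2. simpl in *.
    apply C_ext; simpl; lra. }
  replace f with (hadd p q) by (unfold p; hvec). clearbody p.
  pose proof (hsqnorm_ge0 p). unfold hsqnorm in *. expand_inner.
  rewrite (hinner_sym _ q p), Hqp. simpl. lra.
Qed.

End Relations.

Lemma contraction_fixpoint {X : Hilbert} (F : X -> X) c : 0 <= c < 1 ->
  (forall x y, hnorm (hsub (F x) (F y)) <= c * hnorm (hsub x y)) -> exists l, F l = l.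
Proof.
  intros Hc Hlip. set (u := fun n => Nat.iter n F hzero).
  assert (Hstep : forall n, hnorm (hsub (u (S n)) (u n)) <= c ^ n * hnorm (hsub (u 1%nat) (u O))).
  { induction n as [|n IH]; [simpl; lra|].
    change (u (S (S n))) with (F (u (S n))). change (u (S n)) with (F (u n)) at 2.
    eapply Rle_trans; [apply Hlip|]. simpl. rewrite Rmult_assoc.
    apply Rmult_le_compat_l; [lra | exact IH]. }
  destruct (hcauchy_converges u (hcauchy_of_geometric_steps u c _ Hc Hstep)) as [l Hl].
  exists l. symmetry. apply hsub_eq0, hzero_of_hnorm_small. intros eps He.
  destruct (Hl (eps / 2)) as [N HN]; [lra|].
  pose proof (HN N (le_n N)) as H1. pose proof (HN (S N) (le_S _ _ (le_n N))) as H2.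
  change (u (S N)) with (F (u N)) in H2.
  pose proof (hdist_triangle l (F (u N)) (F l)) as T. rewrite (hdist_sym l (F (u N))) in T.
  pose proof (Hlip (u N) l).
  pose proof (hnorm_ge0 (hsub (u N) l)). nra.
Qed.

Section Perturbation.
Context {X : Hilbert}.
Implicit Types (S A : rel X) (x f v w : X).

Lemma T_s_bound_shift S A a b k m :
  is_subspace S -> self_adjoint S -> 0 <= a -> 0 <= k -> b <= k * Rabs m ->
  (forall x u v, T_s S x v -> T_s A x u -> hnorm u <= a * hnorm v + b * hnorm x) ->
  forall x f v, S x f -> T_s A x v -> hnorm v <= (a + k) * hnorm (hsub f (hscal (Ci m) x)).
Proof.
  intros HSs HS Ha Hk Hb Hbound x f v Hf Hv.
  destruct (T_s_dom S x f HSs HS Hf) as [q Hq].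
  set (N := hnorm (hsub f (hscal (Ci m) x))).
  assert (HN : hsqnorm (hsub f (hscal (Ci m) x)) = N * N) by (symmetry; apply hnorm_sqr).
  rewrite (hsqnorm_shift S m x f (proj1 HS) Hf) in HN.
  pose proof (hnorm_ge0 (hsub f (hscal (Ci m) x))) as HN0. fold N in HN0.
  assert (Hq_le : hnorm q <= N).
  { apply hnorm_le_of_hsqnorm; [exact HN0|]. pose proof (hsqnorm_T_s_le S x f q HSs Hf Hq).
    pose proof (hsqnorm_ge0 x). nra. }
  assert (Hx_le : Rabs m * hnorm x <= N).
  { rewrite <- hnorm_scal_i. apply hnorm_le_of_hsqnorm; [exact HN0|].
    rewrite hsqnorm_scal. simpl. pose proof (hsqnorm_ge0 f). nra. }
  pose proof (Hbound x v q Hq Hv). pose proof (hnorm_ge0 x).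
  assert (a * hnorm q <= a * N) by (apply Rmult_le_compat_l; lra).
  assert (b * hnorm x <= k * (Rabs m * hnorm x)) by nra.
  assert (k * (Rabs m * hnorm x) <= k * N) by (apply Rmult_le_compat_l; lra).
  lra.
Qed.

(* Solving [f + v - i m x = w] is a fixed-point problem [u = w - V u], where [V] maps
   [f - i m x] to [v]; [V] is a contraction by the relative bound. *)
Lemma rel_sum_shift_surjective S A m c :
  is_subspace S -> self_adjoint S -> is_subspace A -> m <> 0 -> 0 <= c < 1 ->
  (forall x, dom S x -> dom (T_s A) x) ->
  (forall x f v, S x f -> T_s A x v -> hnorm v <= c * hnorm (hsub f (hscal (Ci m) x))) ->
  forall w, shift_range (rel_sum S A) m w.
Proof.
  intros HSs HS HAs Hm Hc Hdom Hbound w.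
  destruct (choice (fun u xfv => let '(x, f, v) := xfv in
              S x f /\ T_s A x v /\ u = hsub f (hscal (Ci m) x))) as [G HG].
  { intro u. destruct (self_adjoint_shift_surjective S m HSs HS Hm u) as (x & f & Hf & ->).
    destruct (Hdom x (ex_intro _ f Hf)) as [v Hv]. exists (x, f, v). auto. }
  set (V := fun u => snd (G u)).
  assert (Hlip : forall u1 u2, hnorm (hsub (hsub w (V u1)) (hsub w (V u2))) <= c * hnorm (hsub u1 u2)).
  { intros u1 u2. unfold V.
    specialize (HG u1) as HG1. specialize (HG u2) as HG2.
    destruct (G u1) as [[x1 f1] v1], (G u2) as [[x2 f2] v2]. simpl.
    destruct HG1 as (Hf1 & Hv1 & ->), HG2 as (Hf2 & Hv2 & ->).
    replace (hsub (hsub w v1) (hsub w v2)) with (hopp (hsub v1 v2)) by hvec. rewrite hnorm_opp.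
    replace (hsub (hsub f1 (hscal (Ci m) x1)) (hsub f2 (hscal (Ci m) x2)))
      with (hsub (hsub f1 f2) (hscal (Ci m) (hsub x1 x2))) by hvec.
    apply Hbound; apply subspace_sub; auto using T_s_subspace. }
  destruct (contraction_fixpoint (fun u => hsub w (V u)) c Hc Hlip) as [l Hl].
  unfold V in Hl. specialize (HG l). destruct (G l) as [[x f] v]. simpl in Hl.
  destruct HG as (Hf & Hv & Hlxf).
  exists x, (hadd f v). split.
  - exists f, v. split; [exact Hf | split; [apply Hv | reflexivity]].
  - replace w with (hadd (hsub w v) v) by hvec. rewrite Hl, Hlxf. hvec.
Qed.

Lemma rel_sum_subspace S A : is_subspace S -> is_subspace A -> is_subspace (rel_sum S A).
Proof.
  intros (S0 & Sadd & Sscal) (A0 & Aadd & Ascal). split; [|split].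
  - exists hzero, hzero. split; [exact S0 | split; [exact A0 | hvec]].
  - intros x h y k (f1 & g1 & H1 & H2 & ->) (f2 & g2 & H3 & H4 & ->).
    exists (hadd f1 f2), (hadd g1 g2). split; [auto | split; [auto | hvec]].
  - intros c x h (f & g & H1 & H2 & ->). exists (hscal c f), (hscal c g).
    split; [auto | split; [auto | hvec]].
Qed.

Lemma rel_sum_hermitian S A : hermitian S -> hermitian A -> hermitian (rel_sum S A).
Proof.
  intros HS HA x h (f & g & Hf & Hg & ->) y k (f' & g' & Hf' & Hg' & ->).
  rewrite hinner_add, hinner_add_r, (HS _ _ Hf _ _ Hf'), (HA _ _ Hg _ _ Hg'). reflexivity.
Qed.

End Perturbation.

Lemma adjoint_incl_of_shift_surjective {X : Hilbert} (T : rel X) m : hermitian T ->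
  (forall w, shift_range T m w) -> (forall w, shift_range T (- m) w) ->
  rel_incl (adjoint T) T.
Proof.
  intros HT Hplus Hminus y h Hadj.
  destruct (Hplus (hsub h (hscal (Ci m) y))) as (x & k & Hk & Hw).
  set (z := hsub y x).
  assert (Hz : adjoint T z (hscal (Ci m) z)).
  { intros x' k' H'. pose proof (Hadj x' k' H') as E1. pose proof (HT _ _ Hk _ _ H') as E2.
    pose proof (f_equal (fun t => hinner t x') Hw) as E3. simpl in E3.
    unfold z. expand_inner.
    apply (f_equal Re) in E1 as R1; apply (f_equal Im) in E1 as I1.
    apply (f_equal Re) in E2 as R2; apply (f_equal Im) in E2 as I2.
    apply (f_equal Re) in E3 as R3; apply (f_equal Im) in E3 as I3.
    simpl in *. apply C_ext; simpl; nra. }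
  destruct (Hminus z) as (x2 & k2 & Hk2 & Hz2).
  assert (Ez : hinner z z = C0).
  { pose proof (Hz _ _ Hk2) as E. rewrite Hz2 at 2. expand_inner.
    apply (f_equal Re) in E as R1; apply (f_equal Im) in E as I1. simpl in *.
    apply C_ext; simpl; nra. }
  apply hinner_def, hsub_eq0 in Ez. unfold z in Ez. subst y.
  replace h with k; [exact Hk|].
  replace h with (hadd (hsub h (hscal (Ci m) x)) (hscal (Ci m) x)) by hvec.
  rewrite Hw. hvec.
Qed.

Lemma is_inf_lt (P : R -> Prop) r s : is_inf P r -> r < s -> exists a, P a /\ a < s.
Proof.
  intros [_ Hglb] Hrs. apply NNPP. intro Hn.
  enough (s <= r) by lra. apply Hglb. intros a Ha.
  destruct (Rle_dec s a) as [|Hl]; [assumption|].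
  exfalso. apply Hn. exists a. split; [exact Ha | lra].
Qed.

Theorem theorem4p1 (X : Hilbert) (S A : rel X) :
  is_subspace S -> self_adjoint S ->
  is_subspace A -> is_closed A -> hermitian A ->
  (forall x, dom S x -> dom A x) ->
  rel_bounded (T_s A) (T_s S) ->
  (exists r, rel_bound (T_s A) (T_s S) r /\ r < 1) ->
  is_subspace (rel_sum S A) /\ self_adjoint (rel_sum S A).
Proof.
  intros HSs HS HAs _ HAh _ [Hdom_s _] [r [Hr Hr1]].
  destruct (is_inf_lt _ r 1 Hr Hr1) as (a & (Ha0 & b & Hb0 & Hbound) & Ha1).
  (* [a + k < 1] is the contraction constant, and [m] is large enough that [b <= k |m|]. *)
  set (k := (1 - a) / 2). set (m := b / k + 1).
  assert (Hk : 0 < k) by (unfold k; lra).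
  assert (Hm : 0 < m).
  { pose proof (Rmult_le_pos b (/ k) Hb0 (Rlt_le _ _ (Rinv_0_lt_compat k Hk))).
    unfold m, Rdiv. lra. }
  assert (Hbkm : b <= k * Rabs m) by (rewrite Rabs_pos_eq by lra; unfold m; field_simplify; lra).
  assert (Hdom : forall x, dom S x -> dom (T_s A) x).
  { intros x [f Hf]. apply Hdom_s, (T_s_dom S x f HSs HS Hf). }
  assert (Hsurj : forall m', m' <> 0 -> b <= k * Rabs m' ->
                    forall w, shift_range (rel_sum S A) m' w).
  { intros m' Hm' Hb'. apply (rel_sum_shift_surjective S A m' (a + k)); auto; [unfold k; lra|].
    apply (T_s_bound_shift S A a b k m'); auto; lra. }
  assert (Hherm : hermitian (rel_sum S A)) by (apply rel_sum_hermitian; [apply HS | exact HAh]).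
  split; [apply rel_sum_subspace; assumption | split; [exact Hherm |]].
  apply (adjoint_incl_of_shift_surjective _ m Hherm); apply Hsurj; rewrite ?Rabs_Ropp; lra.
Qed.
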